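(* Let $K\subset M^{m\times n}$ be a three-dimensional subspace without Rank-$1$ connections, with $K=P_K(\mathbb{R}^3)$ where $P_K(z)=(a_{ij}\cdot z)_{ij}$, $a_{ij}\in\mathbb{R}^3$, is a linear isomorphism onto $K$. If $\dim\mathrm{Span}\{a_{i_0l}:l=1,\dots,n\}=3$ for some $i_0$, or $\dim\mathrm{Span}\{a_{lj_0}:l=1,\dots,m\}=3$ for some $j_0$, then there exists $\beta\in\mathbb{R}^{q_0}\setminus\{0\}$ with $\sum_{k=1}^{q_0}\beta_kM_k(X)\ge0$ for all $X\in K$ and $\sum_k\beta_kM_k\not\equiv0$ on $K$, where $M_1,\dots,M_{q_0}$ are all the $2\times2$ minors of $m\times n$ matrices.
   Context: A set has Rank-$1$ connections if it contains $A\ne B$ with $\mathrm{Rank}(A-B)=1$. *)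

From HB Require Import structures.
From mathcomp Require Import all_boot all_order all_algebra.
From mathcomp Require Import reals.
Set Implicit Arguments. Unset Strict Implicit. Unset Printing Implicit Defensive.
Import Order.TTheory GRing.Theory Num.Theory.
Local Open Scope ring_scope.

Definition PK (R : realType) (m n : nat) (a : 'I_m -> 'I_n -> 'rV[R]_3)
  (z : 'rV[R]_3) : 'M[R]_(m, n) :=
  \matrix_(i < m, j < n) \sum_(k < 3) a i j 0 k * z 0 k.

Definition has_rank1_connections (R : realType) (m n : nat)
  (S : 'M[R]_(m, n) -> Prop) : Prop :=
  exists A B, S A /\ S B /\ A <> B /\ \rank (A - B) = 1%N.

(* Index type for 2x2 minors: (i1, i2, j1, j2) with i1 < i2, j1 < j2. *)
Definition minor_idx (m n : nat) := ('I_m * 'I_m * ('I_n * 'I_n))%type.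

Definition valid_minor (m n : nat) (k : minor_idx m n) : bool :=
  (k.1.1 < k.1.2)%N && (k.2.1 < k.2.2)%N.

Definition minor2 (R : realType) (m n : nat) (k : minor_idx m n)
  (X : 'M[R]_(m, n)) : R :=
  X k.1.1 k.2.1 * X k.1.2 k.2.2 - X k.1.1 k.2.2 * X k.1.2 k.2.1.

Definition minor_comb (R : realType) (m n : nat) (beta : minor_idx m n -> R)
  (X : 'M[R]_(m, n)) : R :=
  \sum_(k : minor_idx m n | valid_minor k) beta k * minor2 k X.

From HB Require Import structures.
From mathcomp Require Import all_boot all_order all_algebra.
From mathcomp Require Import reals polyrcf ring lra.
From mathcomp Require Import boolp classical_sets topology normedtype derive.
Set Implicit Arguments. Unset Strict Implicit. Unset Printing Implicit Defensive.
Import Order.TTheory GRing.Theory Num.Theory numFieldNormedType.Exports.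
Local Open Scope ring_scope.

(* If no nonzero combination of 2x2 minors is nonnegative on K, the span of the
   symmetric matrices of the quadratic forms z |-> M_k(P_K z) contains no nonzero
   positive semidefinite matrix. The residual of the trace-one positive semidefinite
   matrix nearest to that span is then positive definite and orthogonal to every
   minor form: for such a Z, a_ij Z a_i'k^T is symmetric in j and k. When the block
   U = (a_i0l)_l has rank 3 this forces every block (a_il)_l to be U T_i with the T_i
   commuting. As 3 is odd, the T_i^T have a common real eigenvector z; every row of
   P_K(z) is then a multiple of z U^T, so P_K(z) - P_K(0) is a rank-one connection. *)

Definition vdot (R : nzRingType) (p : nat) (u v : 'rV[R]_p) : R := (u *m v^T) 0 0.

Section RowForms.
Variables (R : realFieldType) (p : nat).
Implicit Types (u v w x y : 'rV[R]_p).

Lemma vdotE u v : vdot u v = \sum_k u 0 k * v 0 k.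
Proof. by rewrite /vdot mxE; apply: eq_bigr => k _; rewrite mxE. Qed.

Lemma vdotC u v : vdot u v = vdot v u.
Proof. by rewrite !vdotE; apply: eq_bigr => k _; rewrite mulrC. Qed.

Lemma vdotDr u v w : vdot u (v + w) = vdot u v + vdot u w.
Proof. by rewrite /vdot linearD /= mulmxDr mxE. Qed.

Lemma vdotZr u v (c : R) : vdot u (c *: v) = c * vdot u v.
Proof. by rewrite /vdot linearZ /= -scalemxAr mxE. Qed.

Lemma vdotNr u v : vdot u (- v) = - vdot u v.
Proof. by rewrite -scaleN1r vdotZr mulN1r. Qed.

Lemma vdotBr u v w : vdot u (v - w) = vdot u v - vdot u w.
Proof. by rewrite vdotDr vdotNr. Qed.

Lemma vdot0r u : vdot u 0 = 0.
Proof. by rewrite /vdot linear0 mulmx0 mxE. Qed.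

Lemma vdot_mulmxr q u (v : 'rV[R]_q) (A : 'M[R]_(q, p)) :
  vdot u (v *m A) = vdot (u *m A^T) v.
Proof. by rewrite /vdot trmx_mul mulmxA. Qed.

Lemma vdot_ge0 u : 0 <= vdot u u.
Proof. by rewrite vdotE; apply: sumr_ge0 => k _; rewrite -expr2 sqr_ge0. Qed.

Lemma vdot_eq0 u : (vdot u u == 0) = (u == 0).
Proof.
apply/eqP/eqP => [|->]; last by rewrite vdot0r.
rewrite vdotE => /psumr_eq0P u0; apply/rowP => k; rewrite mxE.
by apply/eqP; rewrite -sqrf_eq0 expr2 u0 // => l _; rewrite -expr2 sqr_ge0.
Qed.

Lemma vdot_gt0 u : u != 0 -> 0 < vdot u u.
Proof. by move=> u0; rewrite lt_def vdot_eq0 u0 vdot_ge0. Qed.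

Lemma vdot_expand u v (s : R) :
  vdot (u + s *: v) (u + s *: v) = vdot u u + 2 * s * vdot u v + s ^+ 2 * vdot v v.
Proof.
rewrite vdotDr ![vdot (u + _) _]vdotC !vdotDr !vdotZr ![vdot (s *: v) _]vdotC !vdotZr.
ring.
Qed.

End RowForms.

Section QuadraticForms.
Variables (R : realFieldType) (n : nat).
Implicit Types (v w : 'rV[R]_n) (X Y : 'M[R]_n).

Definition bform X v w : R := (v *m X *m w^T) 0 0.
Definition qform X w : R := bform X w w.

Lemma bform_tr X v w : bform X^T v w = bform X w v.
Proof.
rewrite /bform; have -> : v *m X^T *m w^T = (w *m X *m v^T)^T.
  by rewrite !trmx_mul trmxK mulmxA.
by rewrite mxE.
Qed.

Lemma qformD X Y w : qform (X + Y) w = qform X w + qform Y w.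
Proof. by rewrite /qform /bform mulmxDr mulmxDl mxE. Qed.

Lemma qformZ (c : R) X w : qform (c *: X) w = c * qform X w.
Proof. by rewrite /qform /bform -scalemxAr -scalemxAl mxE. Qed.

Lemma qformN X w : qform (- X) w = - qform X w.
Proof. by rewrite -scaleN1r qformZ mulN1r. Qed.

Lemma qformB X Y w : qform (X - Y) w = qform X w - qform Y w.
Proof. by rewrite qformD qformN. Qed.

Lemma qform_sum (I : finType) (F : I -> 'M[R]_n) w :
  qform (\sum_i F i) w = \sum_i qform (F i) w.
Proof. by rewrite /qform /bform mulmx_sumr mulmx_suml summxE. Qed.

Lemma vdot_mxvec_outer X v w : vdot (mxvec (v^T *m w)) (mxvec X) = bform X v w.
Proof. by rewrite /vdot mxvec_dotmul. Qed.

Lemma qform_vdot X w : qform X w = vdot (mxvec (w^T *m w)) (mxvec X).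
Proof. by rewrite vdot_mxvec_outer. Qed.

Lemma bform_delta X i j : bform X (delta_mx 0 i) (delta_mx 0 j) = X i j.
Proof. by rewrite /bform -rowE trmx_delta -colE !mxE. Qed.

Lemma qform_delta X i : qform X (delta_mx 0 i) = X i i.
Proof. exact: bform_delta. Qed.

Lemma mxtrace_qform X : \tr X = \sum_i qform X (delta_mx 0 i).
Proof. by apply: eq_bigr => i _; rewrite qform_delta. Qed.

Lemma qform_outer (u v w : 'rV[R]_n) :
  qform (u^T *m v) w = vdot u w * vdot v w.
Proof.
by rewrite /qform /bform !mulmxA -(mulmxA _ v) mxE big_ord1 [vdot u w]vdotC.
Qed.

Definition sym_outer v w : 'M[R]_n := v^T *m w + w^T *m v.

Lemma sym_outer_tr v w : (sym_outer v w)^T = sym_outer v w.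
Proof. by rewrite linearD /= !trmx_mul !trmxK addrC. Qed.

Lemma qform_sym_outer u v w : qform (sym_outer u v) w = 2 * (vdot u w * vdot v w).
Proof. by rewrite qformD !qform_outer; ring. Qed.

Lemma vdot_sym_outer X v w : X^T = X ->
  vdot (mxvec X) (mxvec (sym_outer v w)) = 2 * bform X v w.
Proof.
move=> Xsym; rewrite linearD vdotDr ![vdot (mxvec X) _]vdotC !vdot_mxvec_outer.
by rewrite -[in bform X w v]Xsym bform_tr; ring.
Qed.

End QuadraticForms.

Section DensityMatrices.
Variables (R : realFieldType) (n : nat).
Implicit Types (w : 'rV[R]_n) (X Y : 'M[R]_n).

Definition psdmx X := forall w, 0 <= qform X w.
Definition density_mx X := [/\ X^T = X, psdmx X & \tr X = 1].

Lemma psdmx_diag_ge0 X i : psdmx X -> 0 <= X i i.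
Proof. by move=> /(_ (delta_mx 0 i)); rewrite qform_delta. Qed.

Lemma qform_delta_add X i j (s : R) :
  qform X (delta_mx 0 i + s *: delta_mx 0 j) =
  X i i + s * X i j + s * X j i + s ^+ 2 * X j j.
Proof.
rewrite /qform /bform linearD linearZ /= !mulmxDl !mulmxDr -!scalemxAl -!scalemxAr.
rewrite ![(_ + _ : 'M[R]_1) 0 0]mxE ![(_ *: _ : 'M[R]_1) 0 0]mxE.
by rewrite -!/(bform _ _ _) !bform_delta; ring.
Qed.

Lemma density_mx_entry X i j : density_mx X -> `|X i j| <= 1.
Proof.
case=> Xsym Xpsd Xtr.
have diag_le1 k : X k k <= 1.
  rewrite -Xtr /mxtrace (bigD1 k) //= lerDl.
  by apply: sumr_ge0 => l _; apply: psdmx_diag_ge0.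
have Xji : X j i = X i j by rewrite -{1}Xsym mxE.
have := Xpsd (delta_mx 0 i + 1 *: delta_mx 0 j).
have := Xpsd (delta_mx 0 i + (-1) *: delta_mx 0 j).
rewrite !qform_delta_add Xji ler_norml.
have := diag_le1 i; have := diag_le1 j => hi hj h1 h2.
by apply/andP; split; nra.
Qed.

Lemma density_mx_convex X Y (s : R) :
  density_mx X -> density_mx Y -> 0 <= s <= 1 -> density_mx (X + s *: (Y - X)).
Proof.
case=> Xsym Xpsd Xtr [Ysym Ypsd Ytr] /andP[s0 s1]; split.
- by rewrite linearD linearZ linearB /= Xsym Ysym.
- move=> w; rewrite qformD qformZ qformB.
  by have := Xpsd w; have := Ypsd w; nra.
- by rewrite mxtraceD mxtraceZ linearB /= Xtr Ytr subrr mulr0 addr0.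
Qed.

Lemma density_mx_outer w : w != 0 -> density_mx ((vdot w w)^-1 *: (w^T *m w)).
Proof.
move=> w0; split.
- by rewrite linearZ /= trmx_mul trmxK.
- move=> v; rewrite qformZ qform_outer -expr2.
  by rewrite mulr_ge0 ?sqr_ge0 // invr_ge0 vdot_ge0.
- rewrite mxtraceZ mxtrace_mulC /mxtrace big_ord1.
  by rewrite mulVf // gt_eqF // vdot_gt0.
Qed.

End DensityMatrices.

Section OrthogonalProjection.
Variables (R : realFieldType) (r p : nat) (B : 'M[R]_(r, p)).
Hypothesis freeB : row_free B.
Implicit Types x y : 'rV[R]_p.

Definition perp_proj : 'M[R]_p := 1%:M - B^T *m invmx (B *m B^T) *m B.
Local Notation P := perp_proj.

Lemma gram_unitmx : B *m B^T \in unitmx.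
Proof.
rewrite unitmxE unitfE; apply/det0P => -[v v0 vG].
have : vdot (v *m B) (v *m B) = 0 by rewrite vdot_mulmxr -mulmxA vG vdotC vdot0r.
by move/eqP; rewrite vdot_eq0 mulmx_free_eq0 // (negbTE v0).
Qed.

Lemma perp_proj_tr : P^T = P.
Proof.
by rewrite linearB /= trmx1 !trmx_mul trmxK trmx_inv trmx_mul trmxK mulmxA.
Qed.

Lemma mul_perp_proj : B *m P = 0.
Proof.
rewrite mulmxBr mulmx1 !mulmxA mulmxV ?gram_unitmx //.
by rewrite mul1mx subrr.
Qed.

Lemma perp_proj_idem : P *m P = P.
Proof.
by rewrite {1}/perp_proj mulmxBl mul1mx -[_ *m B *m P]mulmxA mul_perp_proj mulmx0 subr0.
Qed.

Lemma perp_proj_row_space x : (x <= B)%MS -> x *m P = 0.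
Proof. by case/submxP=> c ->; rewrite -mulmxA mul_perp_proj mulmx0. Qed.

Lemma sub_perp_proj x : (x - x *m P <= B)%MS.
Proof. by rewrite mulmxBr mulmx1 opprB addrC subrK mulmxA submxMl. Qed.

Lemma vdot_perp_proj x y : vdot (x *m P) (y *m P) = vdot (x *m P) y.
Proof. by rewrite vdot_mulmxr perp_proj_tr -mulmxA perp_proj_idem. Qed.

End OrthogonalProjection.

Section FamilySpan.
Variables (R : fieldType) (m n : nat) (I : finType) (Q : I -> 'M[R]_(m, n)).

Definition span_mx : 'M[R]_(#|I|, m * n) := \matrix_(k < #|I|) mxvec (Q (enum_val k)).

Lemma span_mx_sub i : (mxvec (Q i) <= span_mx)%MS.
Proof. by rewrite -(enum_rankK i) -(rowK (fun k => mxvec (Q (enum_val k)))) row_sub. Qed.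

Lemma span_mxP y : (y <= span_mx)%MS -> exists c : I -> R, vec_mx y = \sum_i c i *: Q i.
Proof.
case/submxP=> c ->; exists (fun i => c 0 (enum_rank i)).
rewrite mulmx_sum_row linear_sum (reindex (@enum_rank I)) /=.
  by apply: eq_bigr => i _; rewrite linearZ /= rowK enum_rankK mxvecK.
exact: onW_bij (@enum_rank_bij I).
Qed.

End FamilySpan.

Section ContinuityClosedness.
Local Open Scope classical_set_scope.
Variables (R : realType) (T : topologicalType).
Implicit Types f g : T -> R.

Lemma continuous_sum (I : Type) (r : seq I) (P : pred I) (F : I -> T -> R) :
  (forall i, continuous (F i)) -> continuous (fun x => \sum_(i <- r | P i) F i x).
Proof.
move=> Fc; elim: r => [|i r IHr].
  by under eq_fun do rewrite big_nil; exact: cst_continuous.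
under eq_fun do rewrite big_cons.
by case: (P i) => // x; exact: continuousD (Fc i x) (IHr x).
Qed.

Lemma closed_eq_fun f g : continuous f -> continuous g -> closed [set x | f x = g x].
Proof.
move=> fc gc; have -> : [set x | f x = g x] = (fun x => f x - g x) @^-1` [set 0].
  apply/seteqP; split => x /=; first by move=> ->; rewrite subrr.
  by move/eqP; rewrite subr_eq0 => /eqP.
apply: preimage_closed => [x _|]; last exact: closed_eq.
exact: continuousB (fc x) (gc x).
Qed.

Lemma closed_le_fun f g : continuous f -> continuous g -> closed [set x | f x <= g x].
Proof.
move=> fc gc; have -> : [set x | f x <= g x] = (fun x => g x - f x) @^-1` [set y | 0 <= y].
  by apply/seteqP; split => x /=; rewrite subr_ge0.
apply: preimage_closed => [x _|]; last exact: closed_ge.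
exact: continuousB (gc x) (fc x).
Qed.

Lemma closed_forall (I : Type) (A : I -> set T) :
  (forall i, closed (A i)) -> closed [set x | forall i, A i x].
Proof.
move=> Acl; have -> : [set x | forall i, A i x] = \bigcap_(i in setT) A i.
  by apply/seteqP; split => x /= Ax i //; apply: Ax.
by apply: closed_bigI => i _; exact: Acl.
Qed.

End ContinuityClosedness.

Section DensityCompact.
Local Open Scope classical_set_scope.
Variable R : realType.

Lemma continuous_mulmx_entry p q (A : 'M[R]_(p, q)) k :
  continuous (fun x : 'rV[R]_p => (x *m A) 0 k).
Proof.
under eq_fun do rewrite mxE.
apply: continuous_sum => l x.
exact: continuousM (@coord_continuous R 1 p 0 l x) (@cst_continuous _ _ (A l k) x).
Qed.

Lemma bounded_rV_entries p (A : set 'rV[R]_p) (c : R) :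
  0 <= c -> (forall x k, A x -> `|x 0 k| <= c) -> bounded_set A.
Proof.
move=> c0 Ac; exists c; split; first by rewrite num_real.
move=> M cM x Ax; change (mx_norm x <= M); rewrite mx_normrE.
apply: bigmax_le => [|[i k] _]; first exact: le_trans c0 (ltW cM).
by rewrite /= [i]ord1; apply: le_trans (Ac x k Ax) (ltW cM).
Qed.

Lemma closed_density_mx n : closed [set x : 'rV[R]_(n * n) | density_mx (vec_mx x)].
Proof.
have entry_cont i j : continuous (fun x : 'rV[R]_(n * n) => vec_mx x i j).
  by under eq_fun do rewrite mxE; exact: coord_continuous.
have -> : [set x : 'rV[R]_(n * n) | density_mx (vec_mx x)] =
    [set x | forall i j, vec_mx x j i = vec_mx x i j] `&`
    [set x | forall w, 0 <= qform (vec_mx x) w] `&` [set x | \tr (vec_mx x) = 1].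
  apply/seteqP; split => x /=.
    by case=> /matrixP Xsym Xpsd Xtr; split; [split|] => // i j; rewrite -Xsym mxE.
  by case=> -[Xsym Xpsd] Xtr; split => //; apply/matrixP => i j; rewrite mxE Xsym.
apply: closedI; first apply: closedI.
- by do 2!apply: closed_forall => ?; apply: closed_eq_fun; apply: entry_cont.
- apply: closed_forall => w; apply: closed_le_fun; first exact: cst_continuous.
  under eq_fun do rewrite qform_vdot vec_mxK vdotC.
  exact: continuous_mulmx_entry.
- apply: closed_eq_fun; last exact: cst_continuous.
  by apply: continuous_sum => i.
Qed.

Lemma density_mx_argmin n (f : 'rV[R]_(n.+1 * n.+1) -> R) : continuous f ->
  exists2 X, density_mx X & forall Y, density_mx Y -> f (mxvec X) <= f (mxvec Y).
Proof.
move=> fc; pose D := [set x : 'rV[R]_(n.+1 * n.+1) | density_mx (vec_mx x)].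
have D0 : D !=set0.
  pose e : 'rV[R]_n.+1 := delta_mx 0 0.
  have e_neq0 : e != 0.
    by apply/negP => /eqP/rowP/(_ 0); rewrite !mxE eqxx => /eqP; rewrite oner_eq0.
  exists (mxvec ((vdot e e)^-1 *: (e^T *m e))).
  by rewrite /D /= mxvecK; apply: density_mx_outer.
have Dbd : bounded_set D.
  apply: (bounded_rV_entries (c := 1)) => // x k Dx.
  by case/mxvec_indexP: k => i j; rewrite -[x]vec_mxK mxvecE; apply: density_mx_entry.
have [x Dx xmin] := EVT_min_rV D0 (bounded_closed_compact Dbd (@closed_density_mx n.+1))
  (continuous_subspaceT fc).
move: Dx; rewrite inE => Dx.
exists (vec_mx x) => // Y DY; rewrite vec_mxK; apply: xmin.
by rewrite inE /D /= mxvecK.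
Qed.

End DensityCompact.

Lemma ge0_linear_coef (R : realFieldType) (a b : R) : 0 <= b ->
  (forall s, 0 < s <= 1 -> 0 <= 2 * s * a + s ^+ 2 * b) -> 0 <= a.
Proof.
move=> b0 Hs; rewrite leNgt; apply/negP => a0.
pose s := - a / (b - a).
have ba0 : 0 < b - a by lra.
have sba : s * (b - a) = - a by rewrite mulfVK // gt_eqF.
have s0 : 0 < s by rewrite divr_gt0 // oppr_gt0.
have s1 : s <= 1 by rewrite ler_pdivrMr // mul1r; lra.
have := Hs s; rewrite s0 s1 => /(_ isT).
have -> : s ^+ 2 * b = s * (- a) + s ^+ 2 * a by rewrite -sba; ring.
nra.
Qed.

Section PsdAlternative.
Variables (R : realType) (n : nat).

Lemma perp_proj_nearest r (B : 'M[R]_(r, n.+1 * n.+1)) : row_free B ->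
  exists2 X, density_mx X & forall Y, density_mx Y ->
    vdot (mxvec X *m perp_proj B) (mxvec X *m perp_proj B) <=
    vdot (mxvec X *m perp_proj B) (mxvec Y).
Proof.
move=> freeB; set P := perp_proj B.
have dist_cont : continuous (fun x : 'rV[R]_(n.+1 * n.+1) => vdot (x *m P) (x *m P)).
  under eq_fun do rewrite vdotE.
  apply: continuous_sum => k x.
  have Pk_cont := continuous_mulmx_entry (A := P) (k := k).
  exact: continuousM (Pk_cont x) (Pk_cont x).
have [X DX Xmin] := density_mx_argmin dist_cont.
exists X => // Y DY; set d := mxvec X *m P.
set e := (mxvec Y - mxvec X) *m P.
have de_ge0 : 0 <= vdot d e.
  apply: (ge0_linear_coef (vdot_ge0 e)) => s /andP[s_gt0 s_le1].
  have s01 : 0 <= s <= 1 by rewrite ltW.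
  have := Xmin _ (density_mx_convex DX DY s01).
  have -> : mxvec (X + s *: (Y - X)) = mxvec X + s *: (mxvec Y - mxvec X).
    by rewrite linearD linearZ linearB.
  rewrite mulmxDl -scalemxAl -/d -/e vdot_expand; lra.
move: de_ge0; rewrite /e vdot_perp_proj //= vdotBr -[vdot d (mxvec X)]vdot_perp_proj //.
by rewrite subr_ge0.
Qed.

Theorem psd_alternative (I : finType) (Q : I -> 'M[R]_n.+1) :
  (forall i, (Q i)^T = Q i) ->
  (forall c : I -> R, psdmx (\sum_i c i *: Q i) -> forall w, qform (\sum_i c i *: Q i) w = 0) ->
  exists Z : 'M[R]_n.+1, [/\ Z^T = Z, forall w, w != 0 -> 0 < qform Z w &
    forall i, vdot (mxvec Z) (mxvec (Q i)) = 0].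
Proof.
move=> Qsym no_psd; pose B := row_base (span_mx Q).
have [X DX Xnear] := perp_proj_nearest (row_base_free (span_mx Q)).
set d := mxvec X *m perp_proj B in Xnear.
have [c Xc] : exists c, vec_mx (mxvec X - d) = \sum_i c i *: Q i.
  by apply: span_mxP; rewrite -(eq_row_base (span_mx Q)) sub_perp_proj.
have dE : vec_mx d = X - \sum_i c i *: Q i by rewrite -Xc linearB /= mxvecK opprB addrC subrK.
have d_neq0 : d != 0.
  apply/eqP => d0; case: DX => _ Xpsd Xtr.
  move: Xc; rewrite d0 subr0 mxvecK => XE; rewrite XE in Xpsd Xtr.
  move: Xtr; rewrite mxtrace_qform big1 => [/eqP|i _]; last exact: no_psd.
  by rewrite eq_sym oner_eq0.
exists (vec_mx d); split.
- case: DX => Xsym _ _.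
  rewrite dE linearB /= Xsym linear_sum /=; congr (_ - _).
  by apply: eq_bigr => i _; rewrite linearZ /= Qsym.
- move=> w w0; have := Xnear _ (density_mx_outer w0).
  rewrite linearZ vdotZr [vdot d (mxvec _)]vdotC -[d in vdot (mxvec _) d]vec_mxK.
  rewrite -qform_vdot.
  move=> /(lt_le_trans (vdot_gt0 d_neq0)).
  by rewrite pmulr_rgt0 // invr_gt0 vdot_gt0.
- move=> i; rewrite vec_mxK -vdot_perp_proj ?row_base_free //.
  rewrite [mxvec (Q i) *m _]perp_proj_row_space ?vdot0r ?row_base_free //.
  by rewrite eq_row_base span_mx_sub.
Qed.

End PsdAlternative.

Lemma rank1_stable_eigenvector (F : fieldType) p n (V : 'M[F]_(p, n)) (S : 'M[F]_n)
    (z : 'rV[F]_n) :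
  \rank V = 1%N -> (V *m S <= V)%MS -> (z <= V)%MS -> z != 0 ->
  exists c, z *m S = c *: z.
Proof.
move=> rV VS zV z0; apply/sub_rVP.
have [_] := mxrank_leqif_sup zV; rewrite rank_rV z0 rV eqxx => /esym Vz.
exact: submx_trans (submxMr S zV) (submx_trans VS Vz).
Qed.

Lemma common_eigenvector3 (R : rcfType) (I : finType) (S : I -> 'M[R]_3) :
  (forall i j, S i *m S j = S j *m S i) ->
  exists2 z : 'rV[R]_3, z != 0 & forall i, exists c, z *m S i = c *: z.
Proof.
move=> Scomm.
(* A non-scalar S i1 has a real eigenvalue lam; N = S i1 - lam has rank 1 or 2, and
   its row space, resp. its left kernel, is a line stable under every S j. *)
suff [V [rV VS]] : exists V : 'M[R]_3, \rank V = 1%N /\ forall i, (V *m S i <= V)%MS.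
  have /rowV0Pn[z zV z0] : V != 0 by rewrite -mxrank_eq0 rV.
  by exists z => // i; apply: rank1_stable_eigenvector (VS i) zV z0.
have [Sscalar|] := boolP [forall i, is_scalar_mx (S i)].
  exists (delta_mx 0 0); split; first by rewrite mxrank_delta.
  by move=> i; have /is_scalar_mxP[c ->] := forallP Sscalar i; rewrite mul_mx_scalar scalemx_sub.
rewrite negb_forall => /existsP[i1 nscalar].
have [lam] : {lam | root (char_poly (S i1)) lam}.
  by apply: odd_poly_root; rewrite size_char_poly.
rewrite -eigenvalue_root_char => /eigenvalueP[v vS v0].
pose N := S i1 - lam%:M.
have vN : v *m N = 0 by rewrite mulmxBr vS mul_mx_scalar subrr.
have NS j : N *m S j = S j *m N.
  by rewrite mulmxBr mulmxBl Scomm mul_mx_scalar mul_scalar_mx.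
have rN_gt0 : (0 < \rank N)%N.
  rewrite lt0n mxrank_eq0; apply: contra nscalar => /eqP N0.
  by apply/is_scalar_mxP; exists lam; apply/eqP; rewrite -subr_eq0 -/N N0.
have rN_le2 : (\rank N <= 2)%N.
  have : (0 < \rank (kermx N))%N.
    by rewrite lt0n mxrank_eq0; apply/rowV0Pn; exists v => //; apply/sub_kermxP.
  by rewrite mxrank_ker; case: (\rank N) (rank_leq_col N) => [|[|[|[|]]]].
case: (ltnP (\rank N) 2) => [rN_lt2 | rN_ge2].
  exists N; split; first by apply/eqP; rewrite eqn_leq -ltnS rN_lt2.
  by move=> j; rewrite NS submxMl.
exists (kermx N); split.
  by rewrite mxrank_ker; have -> : \rank N = 2%N by apply/eqP; rewrite eqn_leq rN_le2.
by move=> j; apply/sub_kermxP; rewrite -mulmxA -NS mulmxA mulmx_ker mul0mx.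
Qed.

Lemma commuting_factorization (F : fieldType) (I : Type) n p
    (C : I -> 'M[F]_(n, p)) (Z : 'M[F]_p) (i0 : I) :
  Z \in unitmx -> Z^T = Z -> row_full (C i0) ->
  (forall i i', C i *m Z *m (C i')^T = C i' *m Z *m (C i)^T) ->
  exists T : I -> 'M[F]_p,
    [/\ forall i, C i = C i0 *m T i, T i0 = 1%:M & forall i j, T i *m T j = T j *m T i].
Proof.
move=> Zu Zsym /row_fullP[B BU] CZC; set U := C i0 in BU CZC.
have cancelZ p' (X Y : 'M[F]_(p', p)) : X *m Z = Y *m Z -> X = Y.
  by apply: row_free_inj; rewrite row_free_unit.
have [T TE] : {T : I -> 'M[F]_p | forall i, T i = B *m C i} by exists (fun i => B *m C i).
have ZC i : Z *m (C i)^T = T i *m Z *m U^T.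
  by have := congr1 (mulmx B) (CZC i0 i); rewrite TE !mulmxA BU mul1mx.
have ZT i : Z *m (T i)^T = T i *m Z.
  have := congr1 (mulmx^~ B^T) (ZC i).
  by rewrite TE -!mulmxA -[(C i)^T *m B^T]trmx_mul -[U^T *m B^T]trmx_mul BU trmx1 mulmx1.
have CU i : C i = U *m T i.
  apply: cancelZ; have := congr1 trmx (ZC i).
  by rewrite !trmx_mul !trmxK Zsym ZT mulmxA.
exists T; split => [//||i j]; first by rewrite TE BU.
have TZT k l : T k *m Z *m (T l)^T = B *m (C k *m Z *m (C l)^T) *m B^T.
  by rewrite !TE trmx_mul !mulmxA.
by apply: cancelZ; rewrite -!mulmxA -!ZT !mulmxA TZT CZC -TZT.
Qed.

Lemma exchange_of_lt (T : Type) m n (g : 'I_m -> 'I_n -> 'I_m -> 'I_n -> T) :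
  (forall i j i' k, g i j i' k = g i' k i j) ->
  (forall (i i' : 'I_m) (j k : 'I_n), (i < i')%N -> (j < k)%N -> g i j i' k = g i k i' j) ->
  forall i i' j k, g i j i' k = g i k i' j.
Proof.
move=> gsym glt i i' j k.
wlog lt_ii' : i i' j k / (i < i')%N.
  move=> gen; case: (ltngtP i i') => [|lt_i'i|/val_inj <-]; first exact: gen.
    by rewrite gsym [RHS]gsym gen.
  by rewrite gsym.
wlog lt_jk : j k / (j < k)%N.
  move=> gen; case: (ltngtP j k) => [|lt_kj|/val_inj <-] //; first exact: gen.
  by rewrite (gen k j lt_kj).
exact: glt.
Qed.

Section PKMatrices.
Variables (R : realType) (m n : nat) (a : 'I_m -> 'I_n -> 'rV[R]_3).
Implicit Types Z : 'M[R]_3.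

Lemma PK_entry z i j : PK a z i j = vdot (a i j) z.
Proof. by rewrite mxE vdotE. Qed.

Lemma PK0 : PK a 0 = 0.
Proof. by apply/matrixP => i j; rewrite PK_entry vdot0r mxE. Qed.

Definition row_coefs i : 'M[R]_(n, 3) := \matrix_(l, k) a i l 0 k.

Lemma row_PK z i : row i (PK a z) = z *m (row_coefs i)^T.
Proof.
apply/rowP => j; rewrite !mxE; apply: eq_bigr => k _.
by rewrite !mxE mulrC.
Qed.

Lemma bform_row_coefs Z i i' j k :
  (row_coefs i *m Z *m (row_coefs i')^T) j k = bform Z (a i j) (a i' k).
Proof.
rewrite /bform !mxE; apply: eq_bigr => l _; rewrite !mxE; congr (_ * _).
by apply: eq_bigr => q _; rewrite !mxE.
Qed.

Lemma exists_rank1_PK Z i0 :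
  Z \in unitmx -> Z^T = Z ->
  (forall i i' j k, bform Z (a i j) (a i' k) = bform Z (a i k) (a i' j)) ->
  \rank (row_coefs i0) = 3%N -> exists z, \rank (PK a z) = 1%N.
Proof.
move=> Zu Zsym exch rk.
have CZC i i' : row_coefs i *m Z *m (row_coefs i')^T =
    row_coefs i' *m Z *m (row_coefs i)^T.
  by apply/matrixP => j k; rewrite !bform_row_coefs -bform_tr Zsym exch.
have [|T [CU T0 Tcomm]] := commuting_factorization (i0 := i0) Zu Zsym _ CZC.
  by rewrite /row_full rk.
have [|z z0 zT] := @common_eigenvector3 _ _ (fun i => (T i)^T).
  by move=> i j; rewrite -!trmx_mul Tcomm.
have [c cE] := fin_all_exists zT.
set U := row_coefs i0 in CU.
have r0 : z *m U^T != 0.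
  by rewrite mulmx_free_eq0 // /row_free mxrank_tr rk.
have c0 : c i0 = 1.
  have : (c i0 - 1) *: z = 0 by rewrite scalerBl -cE T0 trmx1 mulmx1 scale1r subrr.
  by move/eqP; rewrite scaler_eq0 (negbTE z0) orbF subr_eq0 => /eqP.
exists z.
have -> : PK a z = \col_i c i *m (z *m U^T).
  apply/row_matrixP => i; rewrite row_PK (CU i) trmx_mul [LHS]mulmxA cE row_mul.
  rewrite -scalemxAl -mul_scalar_mx; congr (_ *m _).
  by apply/rowP => k; rewrite !mxE ord1 eqxx.
rewrite mxrankMfree; last by rewrite /row_free rank_rV r0.
rewrite -mxrank_tr rank_rV; case: eqP => // /rowP/(_ i0).
by rewrite !mxE c0 => /eqP; rewrite oner_eq0.
Qed.

Definition minor_form (k : minor_idx m n) : 'M[R]_3 :=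
  if valid_minor k then
    sym_outer (a k.1.1 k.2.1) (a k.1.2 k.2.2) - sym_outer (a k.1.1 k.2.2) (a k.1.2 k.2.1)
  else 0.

Lemma minor_form_tr k : (minor_form k)^T = minor_form k.
Proof. by rewrite /minor_form; case: ifP; rewrite ?linearB /= ?sym_outer_tr ?trmx0. Qed.

Lemma qform_minor_comb (c : minor_idx m n -> R) w :
  qform (\sum_k c k *: minor_form k) w = 2 * minor_comb c (PK a w).
Proof.
rewrite qform_sum /minor_comb mulr_sumr [RHS]big_mkcond; apply: eq_bigr => k _.
rewrite qformZ /minor_form; case: ifP => _; last by rewrite /qform /bform mulmx0 mul0mx mxE mulr0.
by rewrite qformB !qform_sym_outer /minor2 !PK_entry; ring.
Qed.

Lemma minor_exchange (Z : 'M[R]_3) : Z^T = Z ->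
  (forall k, vdot (mxvec Z) (mxvec (minor_form k)) = 0) ->
  forall i i' j k, bform Z (a i j) (a i' k) = bform Z (a i k) (a i' j).
Proof.
move=> Zsym Zperp; apply: exchange_of_lt => [i j i' k | i i' j k lt_ii' lt_jk].
  by rewrite -[in LHS]Zsym bform_tr.
have := Zperp ((i, i'), (j, k)); rewrite /minor_form /valid_minor /= lt_ii' lt_jk /=.
rewrite linearB vdotBr !vdot_sym_outer // -mulrBr => /eqP.
by rewrite mulf_eq0 pnatr_eq0 subr_eq0 => /eqP.
Qed.

Lemma minor_comb_alternative :
  ~ (exists beta : minor_idx m n -> R,
      (exists k, valid_minor k /\ beta k != 0) /\
      (forall z, 0 <= minor_comb beta (PK a z)) /\
      (exists z, minor_comb beta (PK a z) != 0)) ->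
  exists Z : 'M[R]_3, [/\ Z \in unitmx, Z^T = Z &
    forall i i' j k, bform Z (a i j) (a i' k) = bform Z (a i k) (a i' j)].
Proof.
move=> no_beta.
have [|Z [Zsym Zpd Zperp]] := @psd_alternative R 2 _ minor_form minor_form_tr.
  move=> c c_psd w; apply: contrapT => cw; apply: no_beta.
  exists c; split; [|split].
  - apply: contrapT => no_k; apply: cw.
    rewrite qform_minor_comb /minor_comb big1 ?mulr0 // => k vk.
    have /negbNE/eqP -> : ~~ (c k != 0) by apply/negP => ck; apply: no_k; exists k.
    by rewrite mul0r.
  - by move=> z; have := c_psd z; rewrite qform_minor_comb pmulr_rge0.
  - by exists w; apply/eqP => cw0; apply: cw; rewrite qform_minor_comb cw0 mulr0.
exists Z; split => //; last exact: minor_exchange.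
rewrite unitmxE unitfE; apply/det0P => -[v v0 vZ].
by have := Zpd v v0; rewrite /qform /bform vZ mul0mx mxE ltxx.
Qed.

End PKMatrices.

Lemma PK_tr (R : realType) m n (a : 'I_m -> 'I_n -> 'rV[R]_3) z :
  PK (fun j i => a i j) z = (PK a z)^T.
Proof. by apply/matrixP => j i; rewrite !mxE. Qed.

Theorem lemma7 (R : realType) (m n : nat) (a : 'I_m -> 'I_n -> 'rV[R]_3) :
  injective (PK a) ->
  ~ has_rank1_connections (fun X => exists z, X = PK a z) ->
  ((exists i0 : 'I_m, \rank (\matrix_(l < n, k < 3) a i0 l 0 k) = 3%N) \/
   (exists j0 : 'I_n, \rank (\matrix_(l < m, k < 3) a l j0 0 k) = 3%N)) ->
  exists beta : minor_idx m n -> R,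
    (exists k, valid_minor k /\ beta k != 0) /\
    (forall z : 'rV[R]_3, 0 <= minor_comb beta (PK a z)) /\
    (exists z : 'rV[R]_3, minor_comb beta (PK a z) != 0).
Proof.
move=> _ no_rank1 full_span; apply: contrapT => no_beta.
have [Z [Zu Zsym exch]] := minor_comb_alternative no_beta.
have [z rank_PKz] : exists z, \rank (PK a z) = 1%N.
  case: full_span => [[i0 rk] | [j0 rk]]; first exact: exists_rank1_PK Zu Zsym exch rk.
  have exchT j j' i i' : bform Z (a i j) (a i' j') = bform Z (a i' j) (a i j').
    by rewrite exch -bform_tr Zsym.
  have [z rank_PKz] := exists_rank1_PK (a := fun j i => a i j) Zu Zsym exchT rk.
  by exists z; rewrite -mxrank_tr -PK_tr.
apply: no_rank1; exists (PK a z), (PK a 0); split; first by exists z.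
split; first by exists 0.
rewrite PK0 subr0; split => // PKz0.
by move: rank_PKz; rewrite PKz0 mxrank0.
Qed.
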